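(* Let $d\in\mathbb N$, let $\emptyset\neq\Theta\subset\mathbb R^d$ be a $C^1$-hypersurface of positive reach, and let $\mu\colon\mathbb R^d\to\mathbb R^d$, $\sigma\colon\mathbb R^d\to\mathbb R^{d\times d}$ satisfy: there is $\varepsilon\in(0,\mathrm{reach}(\Theta))$ such that $\mu$ and $\sigma$ are bounded on $\Theta^\varepsilon$; $\mu$ is intrinsic Lipschitz continuous on $\mathbb R^d\setminus\Theta$; $\sigma$ is Lipschitz continuous. Then there exists $c\in(0,\infty)$ such that $\|\mu(x)\|+\|\sigma(x)\|\le c(1+\|x\|)$ for all $x\in\mathbb R^d$.
   Context: $\|\cdot\|$ is the Euclidean norm on vectors and the Frobenius norm on matrices. A nonempty $\Theta\subset\mathbb R^d$ is a $C^1$-hypersurface if for every $x\in\Theta$ there are open $U,V$ with $x\in U$ and a $C^1$-diffeomorphism $\phi\colon U\to V$ with $\phi(\Theta\cap U)=(\mathbb R^{d-1}\times\{0\})\cap V$ ($\{0\}$ if $d=1$). $d(x,\Theta)=\inf_{y\in\Theta}\|x-y\|$, $\Theta^\varepsilon=\{x:d(x,\Theta)<\varepsilon\}$, $\mathrm{reach}(\Theta)=\sup\{\varepsilon\ge0:$ every point of $\Theta^\varepsilon$ has a unique nearest point in $\Theta\}$. Intrinsic Lipschitz continuity on $A$: $\|f(x)-f(y)\|\le L\rho_A(x,y)$ for all $x,y\in A$, where $\rho_A(x,y)$ is the infimum of the lengths $l(\gamma)=\sup\sum_k\|\gamma(t_k)-\gamma(t_{k-1})\|$ (over partitions of $[0,1]$)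 of continuous curves $\gamma\colon[0,1]\to A$ from $x$ to $y$. *)

From HB Require Import structures.
From mathcomp Require Import all_boot all_order all_algebra.
From mathcomp Require Import all_classical all_reals all_analysis.
Set Implicit Arguments. Unset Strict Implicit. Unset Printing Implicit Defensive.
Import Order.TTheory GRing.Theory Num.Theory.
Import numFieldNormedType.Exports.
Local Open Scope classical_set_scope.
Local Open Scope ring_scope.

Section Defs.
Context {R : realType} {d : nat}.

Definition enorm (v : 'rV[R]_d) : R := Num.sqrt (\sum_(i < d) v 0 i ^+ 2).

Definition frob (A : 'M[R]_d) : R := Num.sqrt (\sum_(i < d) \sum_(j < d) A i j ^+ 2).

Definition C1_on (U : set 'rV[R]_d) (f : 'rV[R]_d -> 'rV[R]_d) : Prop :=
  (forall x, U x -> differentiable f x) /\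
  (forall v : 'rV[R]_d, {within U, continuous (fun x => 'd f x v)}).

(* R^{d-1} x {0}: the last coordinate vanishes. *)
Definition last_coord_zero (v : 'rV[R]_d) : Prop :=
  forall i : 'I_d, (nat_of_ord i).+1 = d -> v 0 i = 0.

Definition C1_hypersurface (Th : set 'rV[R]_d) : Prop :=
  Th !=set0 /\
  forall x, Th x -> exists (U V : set 'rV[R]_d) (phi psi : 'rV[R]_d -> 'rV[R]_d),
    [/\ open U, open V & U x] /\
    (forall u, U u -> V (phi u)) /\ (forall v, V v -> U (psi v)) /\
    (forall u, U u -> psi (phi u) = u) /\ (forall v, V v -> phi (psi v) = v) /\
    C1_on U phi /\ C1_on V psi /\
    phi @` (Th `&` U) = [set v | V v /\ last_coord_zero v].

Definition dist_set (x : 'rV[R]_d) (Th : set 'rV[R]_d) : R :=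
  inf [set enorm (x - y) | y in Th].

Definition tube (Th : set 'rV[R]_d) (eps : R) : set 'rV[R]_d :=
  [set x | dist_set x Th < eps].

Definition unique_nearest (Th : set 'rV[R]_d) (x : 'rV[R]_d) : Prop :=
  exists y, (Th y /\ enorm (x - y) = dist_set x Th) /\
    forall z, Th z -> enorm (x - z) = dist_set x Th -> z = y.

Definition reach (Th : set 'rV[R]_d) : \bar R :=
  ereal_sup [set e%:E | e in [set e : R | 0 <= e /\
                 forall x, tube Th e x -> unique_nearest Th x]].

Definition curve_length (gamma : R -> 'rV[R]_d) : \bar R :=
  ereal_sup [set l | exists (n : nat) (t : nat -> R),
    [/\ t 0%N = 0, t n = 1, (forall k, (k < n)%N -> t k <= t k.+1) &
        l = (\sum_(k < n) enorm (gamma (t k.+1) - gamma (t k)))%:E]].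

Definition intrinsic_dist (A : set 'rV[R]_d) (x y : 'rV[R]_d) : \bar R :=
  ereal_inf [set curve_length gamma | gamma in
    [set gamma : R -> 'rV[R]_d |
      [/\ {within `[0, 1], continuous gamma},
          (forall t, t \in `[0, 1] -> A (gamma t)),
          gamma 0 = x & gamma 1 = y]]].

(* intrinsic Lipschitz continuity on A (with convention L * (+oo) = +oo,
   enforced by taking L > 0) *)
Definition intrinsic_lipschitz (A : set 'rV[R]_d) (f : 'rV[R]_d -> 'rV[R]_d) : Prop :=
  exists L : R, 0 < L /\ forall x y, A x -> A y ->
    ((enorm (f x - f y))%:E <= L%:E * intrinsic_dist A x y)%E.

End Defs.

(* The Lipschitz continuity of sigma gives its linear growth directly. For mu,
   fix y in Th and a point x outside the tube Th^eps. Walk from x towards y on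
   a grid of mesh < eps and stop at the first grid point z that lies in the
   tube: every earlier grid point is at distance >= eps from Th, so the segment
   [x, z] misses Th. Along that segment the intrinsic distance is at most
   |z - x| <= |y - x|, hence |mu x| <= |mu z| + L |y - x| <= M + L |y - x|. *)
From HB Require Import structures.
From mathcomp Require Import all_boot all_order all_algebra.
From mathcomp Require Import all_classical all_reals all_analysis.
From mathcomp Require Import ring lra.
Import Order.TTheory GRing.Theory Num.Theory.
Import numFieldNormedType.Exports.
Local Open Scope classical_set_scope.
Local Open Scope ring_scope.

Lemma Lagrange_identity {R : comPzRingType} {I : finType} (F G : I -> R) :
  \sum_i \sum_j (F i * G j - F j * G i) ^+ 2 =
  2 * ((\sum_i F i ^+ 2) * (\sum_i G i ^+ 2) - (\sum_i F i * G i) ^+ 2).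
Proof.
have expand i j : (F i * G j - F j * G i) ^+ 2 =
    F i ^+ 2 * G j ^+ 2 + F j ^+ 2 * G i ^+ 2 - 2 * ((F i * G i) * (F j * G j)).
  by ring.
have sumFG : \sum_i \sum_j F i ^+ 2 * G j ^+ 2 =
    (\sum_i F i ^+ 2) * (\sum_i G i ^+ 2).
  by rewrite mulr_suml; apply: eq_bigr => i _; rewrite mulr_sumr.
have sumGF : \sum_i \sum_j F j ^+ 2 * G i ^+ 2 =
    (\sum_i F i ^+ 2) * (\sum_i G i ^+ 2).
  by rewrite exchange_big.
have sum_cross : \sum_i \sum_j 2 * ((F i * G i) * (F j * G j)) =
    2 * (\sum_i F i * G i) ^+ 2.
  rewrite expr2 mulr_suml mulr_sumr; apply: eq_bigr => i _.
  by rewrite mulr_sumr mulr_sumr.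
under eq_bigr do under eq_bigr do rewrite expand.
under eq_bigr do rewrite sumrB big_split /=.
by rewrite sumrB big_split /= sumFG sumGF sum_cross; ring.
Qed.

Section EuclideanSums.
Context {R : rcfType} {I : finType}.
Implicit Types F G : I -> R.

Lemma CauchySchwarz_sum F G :
  \sum_i F i * G i <= Num.sqrt (\sum_i F i ^+ 2) * Num.sqrt (\sum_i G i ^+ 2).
Proof.
have sq_le : (\sum_i F i * G i) ^+ 2 <= (\sum_i F i ^+ 2) * (\sum_i G i ^+ 2).
  rewrite -subr_ge0 -(pmulr_rge0 _ (ltr0n R 2)) -Lagrange_identity.
  by do 2!(apply: sumr_ge0 => ? _); exact: sqr_ge0.
rewrite -sqrtrM ?sumr_ge0 // => [|i _]; last exact: sqr_ge0.
apply: le_trans (ler_norm _) _.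
by rewrite -sqrtr_sqr ler_sqrt // mulr_ge0 // sumr_ge0 // => i _; exact: sqr_ge0.
Qed.

Lemma sqrt_sum_sqrD F G :
  Num.sqrt (\sum_i (F i + G i) ^+ 2) <=
  Num.sqrt (\sum_i F i ^+ 2) + Num.sqrt (\sum_i G i ^+ 2).
Proof.
have sum_sqr_ge0 H : 0 <= \sum_i H i ^+ 2 :> R.
  by apply: sumr_ge0 => i _; exact: sqr_ge0.
rewrite -(ger0_norm (addr_ge0 (sqrtr_ge0 _) (sqrtr_ge0 _))) -sqrtr_sqr.
rewrite ler_sqrt ?sqr_ge0 //.
have expand i : (F i + G i) ^+ 2 = F i ^+ 2 + G i ^+ 2 + 2 * (F i * G i) by ring.
under eq_bigr do rewrite expand.
rewrite !big_split /= -mulr_sumr sqrrD !sqr_sqrtr ?sum_sqr_ge0 // -mulr_natr.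
have := CauchySchwarz_sum F G; lra.
Qed.

End EuclideanSums.

Section Norms.
Context {R : realType} {d : nat}.
Implicit Types (v w : 'rV[R]_d) (A B : 'M[R]_d).

Lemma enorm_ge0 v : 0 <= enorm v.
Proof. exact: sqrtr_ge0. Qed.

Lemma frob_ge0 A : 0 <= frob A.
Proof. exact: sqrtr_ge0. Qed.

Lemma enorm0 : enorm (0 : 'rV[R]_d) = 0.
Proof. by rewrite /enorm big1 ?sqrtr0 // => i _; rewrite mxE expr0n. Qed.

Lemma enormZ (s : R) v : enorm (s *: v) = `|s| * enorm v.
Proof.
rewrite /enorm (eq_bigr (fun i => s ^+ 2 * v 0 i ^+ 2)) => [|i _]; last first.
  by rewrite mxE exprMn.
by rewrite -mulr_sumr sqrtrM ?sqr_ge0 // sqrtr_sqr.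
Qed.

Lemma enormN v : enorm (- v) = enorm v.
Proof. by rewrite -scaleN1r enormZ normrN normr1 mul1r. Qed.

Lemma ler_enormD v w : enorm (v + w) <= enorm v + enorm w.
Proof.
rewrite /enorm; under eq_bigr do rewrite mxE.
exact: (sqrt_sum_sqrD (fun i => v 0 i) (fun i => w 0 i)).
Qed.

Lemma ler_enormB v w : enorm (v - w) <= enorm v + enorm w.
Proof. by rewrite -(enormN w) ler_enormD. Qed.

Lemma ler_frobD A B : frob (A + B) <= frob A + frob B.
Proof.
rewrite /frob !pair_bigA /=; under eq_bigr do rewrite mxE.
exact: (sqrt_sum_sqrD (fun p => A p.1 p.2) (fun p => B p.1 p.2)).
Qed.

End Norms.

Section Grid.
Context {R : archiRealFieldType}.

Lemma exists_mesh_lt {D eps : R} : 0 <= D -> 0 < eps ->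
  exists2 N : nat, (0 < N)%N & D / N%:R < eps.
Proof.
move=> D_ge0 eps_gt0; exists (Num.bound (D / eps)).+1 => //.
rewrite ltr_pdivrMr ?ltr0n // mulrC -ltr_pdivrMr //.
apply: lt_le_trans (archi_boundP (divr_ge0 D_ge0 (ltW eps_gt0))) _.
by rewrite ler_nat.
Qed.

Lemma exists_nat_dist_le1 {k : nat} {u : R} : 0 <= u <= k.+1%:R ->
  exists2 j, (j <= k)%N & `|u - j%:R| <= 1.
Proof.
elim: k u => [|k IH] u /andP[u_ge0 u_le].
  by exists 0%N; rewrite // subr0 ger0_norm.
have [u_lek|u_gtk] := leP u k.+1%:R.
  by have [j j_le ?] := IH u (introT andP (conj u_ge0 u_lek)); exists j => //; exact: leqW.
exists k.+1 => //; rewrite ger0_norm; last by rewrite subr_ge0 ltW.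
by move: u_le; rewrite -[k.+2]addn1 natrD; lra.
Qed.

End Grid.

Section Segments.
Context {R : realType} {d : nat}.
Implicit Types (Th A : set 'rV[R]_d) (x y z w : 'rV[R]_d).

Lemma dist_set_le {Th y} x : Th y -> dist_set x Th <= enorm (x - y).
Proof.
move=> Thy; apply: ge_inf; last by exists y.
by exists 0 => _ [z _ <-]; exact: enorm_ge0.
Qed.

Lemma tube_mem {Th eps x} : 0 < eps -> Th x -> tube Th eps x.
Proof.
move=> eps_gt0 Thx; rewrite /tube /=.
by apply: le_lt_trans (dist_set_le x Thx) _; rewrite subrr enorm0.
Qed.

Lemma curve_length_segment x w :
  (curve_length (fun t : R => (x + t *: w)%R) <= (enorm w)%:E)%E.
Proof.
apply: ge_ereal_sup => _ [n [t [t0 tn t_mono ->]]]; rewrite lee_fin.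
rewrite (eq_bigr (fun k : 'I_n => (t k.+1 - t k) * enorm w)) => [|k _]; last first.
  rewrite opprD addrACA subrr add0r -scalerBl enormZ ger0_norm //.
  by rewrite subr_ge0 t_mono.
rewrite -mulr_suml -(big_mkord xpredT (fun k => t k.+1 - t k)) telescope_sumr //.
by rewrite tn t0 subr0 mul1r.
Qed.

Lemma continuous_segment x w : continuous (fun t : R => x + t *: w).
Proof.
move=> t; apply: (@cvgD R 'rV[R]_d); first exact: cvg_cst.
by apply: (@cvgZ R 'rV[R]_d); [exact: cvg_id | exact: cvg_cst].
Qed.

Lemma intrinsic_dist_le_segment {A x z} :
  (forall t, t \in `[0, 1] -> A (x + t *: (z - x))) ->
  (intrinsic_dist A x z <= (enorm (z - x))%:E)%E.
Proof.
move=> A_seg; apply: le_trans (curve_length_segment x (z - x)).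
apply: ereal_inf_lbound; exists (fun t : R => x + t *: (z - x)) => //; split=> //.
- exact/continuous_subspaceT/continuous_segment.
- by rewrite scale0r addr0.
- by rewrite scale1r addrC subrK.
Qed.

Lemma segment_avoids_of_far_grid {Th eps x w} {N k : nat} :
  (0 < N)%N -> (0 < k)%N -> enorm w / N%:R < eps ->
  (forall j, (j < k)%N -> eps <= dist_set (x + (j%:R / N%:R) *: w) Th) ->
  forall s, 0 <= s <= k%:R / N%:R -> ~ Th (x + s *: w).
Proof.
move=> N_gt0 k_gt0 mesh far s /andP[s_ge0 s_le] Th_s.
have N_gt0' : 0 < N%:R :> R by rewrite ltr0n.
have [j j_le sN_near] : exists2 j, (j <= k.-1)%N & `|s * N%:R - j%:R| <= 1.
  by apply: exists_nat_dist_le1; rewrite prednK // mulr_ge0 ?ler0n //= -ler_pdivlMr.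
have j_lt_k : (j < k)%N by rewrite -(prednK k_gt0) ltnS.
have near_grid : `|j%:R / N%:R - s| <= 1 / N%:R.
  rewrite -[s](mulfK (lt0r_neq0 N_gt0')) -mulrBl normrM normfV.
  by rewrite (ger0_norm (ltW N_gt0')) ler_pM2r ?invr_gt0 // distrC.
have := far j j_lt_k; have := dist_set_le (x + (j%:R / N%:R) *: w) Th_s.
rewrite opprD addrACA subrr add0r -scalerBl enormZ => dist_le far_j.
have : `|j%:R / N%:R - s| * enorm w <= enorm w / N%:R.
  by apply: le_trans (ler_wpM2r (enorm_ge0 _) near_grid) _; rewrite mul1r mulrC.
lra.
Qed.

Lemma segment_first_tube_point {Th eps x y} : 0 < eps -> Th y -> ~ tube Th eps x ->
  exists z, [/\ tube Th eps z, enorm (z - x) <= enorm (y - x) &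
    forall t, t \in `[0, 1] -> ~ Th (x + t *: (z - x))].
Proof.
move=> eps_gt0 Thy x_out.
have [N N_gt0 mesh] := exists_mesh_lt (enorm_ge0 (y - x)) eps_gt0.
pose grid k := x + (k%:R / N%:R) *: (y - x).
pose in_tube k := (k <= N)%N && (dist_set (grid k) Th < eps).
have [|k /andP[k_le_N k_in] k_min] := ex_minnP (ex_intro in_tube N _).
  rewrite /in_tube leqnn /grid divff ?lt0r_neq0 ?ltr0n // scale1r addrC subrK.
  exact: tube_mem.
have k_gt0 : (0 < k)%N.
  rewrite lt0n; apply/eqP => k0; apply: x_out.
  by move: k_in; rewrite k0 /grid mul0r scale0r addr0.
have far j : (j < k)%N -> eps <= dist_set (grid j) Th.
  move=> j_lt_k; rewrite leNgt; apply/negP => j_in.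
  have := k_min j; rewrite /in_tube j_in (leq_trans (ltnW j_lt_k) k_le_N).
  by move=> /(_ isT); rewrite leqNgt j_lt_k.
have avoid := segment_avoids_of_far_grid N_gt0 k_gt0 mesh far.
have sk_ge0 : 0 <= k%:R / N%:R :> R by rewrite divr_ge0 ?ler0n.
have sk_le1 : k%:R / N%:R <= 1 :> R by rewrite ler_pdivrMr ?ltr0n // mul1r ler_nat.
have grid_k_sub : grid k - x = (k%:R / N%:R) *: (y - x) by rewrite addrAC subrr add0r.
exists (grid k); split => //.
- by rewrite grid_k_sub enormZ ger0_norm // ler_piMl ?enorm_ge0.
- move=> t; rewrite in_itv /= => /andP[t_ge0 t_le1].
  rewrite grid_k_sub scalerA; apply: avoid.
  by rewrite mulr_ge0 //= ler_piMl.
Qed.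

End Segments.

Section LinearGrowth.
Context {R : realType} {d : nat}.
Implicit Types (Th : set 'rV[R]_d) (eps M L : R) (x y : 'rV[R]_d).

Lemma intrinsic_lipschitz_bound_from_tube {Th} {mu : 'rV[R]_d -> 'rV[R]_d} {eps M L y} :
  0 < eps -> Th y -> 0 <= L ->
  (forall x, tube Th eps x -> enorm (mu x) <= M) ->
  (forall x z, (~` Th) x -> (~` Th) z ->
    ((enorm (mu x - mu z))%:E <= L%:E * intrinsic_dist (~` Th) x z)%E) ->
  forall x, enorm (mu x) <= M + L * enorm (y - x).
Proof.
move=> eps_gt0 Thy L_ge0 mu_tube mu_lip x.
have [x_in|x_out] := pselect (tube Th eps x).
  by apply: le_trans (mu_tube x x_in) _; rewrite lerDl mulr_ge0 ?enorm_ge0.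
have [z [z_in zx_le seg_out]] := segment_first_tube_point eps_gt0 Thy x_out.
have x_notin : ~ Th x by move=> Thx; exact/x_out/tube_mem.
have z_notin : ~ Th z.
  by have := seg_out 1; rewrite in_itv /= ler01 lexx scale1r addrC subrK; apply.
have mu_xz : enorm (mu x - mu z) <= L * enorm (y - x).
  rewrite -lee_fin; apply: le_trans (mu_lip x z x_notin z_notin) _.
  apply: le_trans (lee_wpmul2l _ (intrinsic_dist_le_segment seg_out)) _.
    by rewrite lee_fin.
  by rewrite -EFinM lee_fin ler_wpM2l.
have := ler_enormD (mu z) (mu x - mu z); rewrite addrC subrK.
have := mu_tube z z_in; lra.
Qed.

Lemma linear_growth_of_intrinsic_lipschitz {Th} {mu : 'rV[R]_d -> 'rV[R]_d} {eps M} :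
  Th !=set0 -> 0 < eps -> (forall x, tube Th eps x -> enorm (mu x) <= M) ->
  intrinsic_lipschitz (~` Th) mu ->
  exists2 C, 0 <= C & forall x, enorm (mu x) <= C * (1 + enorm x).
Proof.
move=> [y Thy] eps_gt0 mu_tube [L [L_gt0 mu_lip]].
have mu_le := intrinsic_lipschitz_bound_from_tube eps_gt0 Thy (ltW L_gt0) mu_tube mu_lip.
have M_ge0 : 0 <= M := le_trans (enorm_ge0 _) (mu_tube y (tube_mem eps_gt0 Thy)).
have L_ge0 := ltW L_gt0.
have Ly_ge0 := mulr_ge0 L_ge0 (enorm_ge0 y).
exists (M + L * (1 + enorm y)) => [|x]; first by nra.
have L_seg := ler_wpM2l L_ge0 (ler_enormB y x).
have := mu_le x; have := mulr_ge0 M_ge0 (enorm_ge0 x).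
have := mulr_ge0 Ly_ge0 (enorm_ge0 x); nra.
Qed.

Lemma linear_growth_of_lipschitz {f : 'rV[R]_d -> 'M[R]_d} {L} :
  (forall x z, frob (f x - f z) <= L * enorm (x - z)) ->
  exists2 C, 0 <= C & forall x, frob (f x) <= C * (1 + enorm x).
Proof.
move=> f_lip; exists (frob (f 0) + `|L|) => [|x]; first by rewrite addr_ge0 ?frob_ge0.
have := ler_frobD (f 0) (f x - f 0); rewrite addrC subrK.
have := f_lip x 0; rewrite subr0; have := ler_norm L; have := normr_ge0 L.
have := enorm_ge0 x; have := frob_ge0 (f 0); nra.
Qed.

End LinearGrowth.

Theorem lemma1 (R : realType) (d : nat) (hd : (0 < d)%N)
  (Th : set 'rV[R]_d)
  (mu : 'rV[R]_d -> 'rV[R]_d) (sigma : 'rV[R]_d -> 'M[R]_d) :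
  Th !=set0 ->
  C1_hypersurface Th ->
  (0 < reach Th)%E ->
  (exists eps : R, [/\ 0 < eps, (eps%:E < reach Th)%E,
     (exists M : R, forall x, tube Th eps x -> enorm (mu x) <= M) &
     (exists M : R, forall x, tube Th eps x -> frob (sigma x) <= M)]) ->
  intrinsic_lipschitz (~` Th) mu ->
  (exists L : R, forall x y, frob (sigma x - sigma y) <= L * enorm (x - y)) ->
  exists c : R, 0 < c /\
    forall x, enorm (mu x) + frob (sigma x) <= c * (1 + enorm x).
Proof.
move=> Th_ne _ _ [eps [eps_gt0 _ [M mu_tube] _]] mu_lip [L sigma_lip].
have [C1 C1_ge0 mu_le] :=
  linear_growth_of_intrinsic_lipschitz Th_ne eps_gt0 mu_tube mu_lip.
have [C2 C2_ge0 sigma_le] := linear_growth_of_lipschitz sigma_lip.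
exists (C1 + C2 + 1); split => [|x]; first lra.
have := mu_le x; have := sigma_le x; have := enorm_ge0 x; nra.
Qed.
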